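(* The topological product of a countable family of domain-complete (resp. LCS-complete) spaces is domain-complete (resp. LCS-complete).
   Context: A space is domain-complete (resp. LCS-complete) if it is homeomorphic to a $G_\delta$ subset (countable intersection of open sets), with the subspace topology, of some continuous dcpo with its Scott topology (resp. of some locally compact sober space, locally compact meaning every point has a neighborhood base of compact saturated sets). *)

From Stdlib Require Import List.

Set Implicit Arguments.

Definition topology (X : Type) := (X -> Prop) -> Prop.

Definition is_topology (X : Type) (O : topology X) : Prop :=
  O (fun _ => True) /\
  (forall U V, O U -> O V -> O (fun x => U x /\ V x)) /\
  (forall F : (X -> Prop) -> Prop, (forall U, F U -> O U) ->
     O (fun x => exists U, F U /\ U x)).

Definition continuous (X Y : Type) (OX : topology X) (OY : topology Y)
  (f : X -> Y) : Prop :=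
  forall V, OY V -> OX (fun x => V (f x)).

Definition homeomorphic (X Y : Type) (OX : topology X) (OY : topology Y) : Prop :=
  exists (f : X -> Y) (g : Y -> X),
    (forall x, g (f x) = x) /\ (forall y, f (g y) = y) /\
    continuous OX OY f /\ continuous OY OX g.

Definition subspace (X : Type) (O : topology X) (A : X -> Prop)
  : topology {x : X | A x} :=
  fun V => exists U, O U /\ forall y : {x : X | A x}, V y <-> U (proj1_sig y).

Definition G_delta (X : Type) (O : topology X) (A : X -> Prop) : Prop :=
  exists U : nat -> X -> Prop, (forall n, O (U n)) /\
    forall x, A x <-> (forall n, U n x).

Definition box (X : nat -> Type) (N : nat) (V : forall n, X n -> Prop)
  (y : forall n, X n) : Prop :=
  forall i, i < N -> V i (y i).
Arguments box : clear implicits.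

Arguments box : clear implicits.
Definition product_topology (X : nat -> Type) (O : forall n, topology (X n))
  : topology (forall n, X n) :=
  fun W => forall x, W x ->
    exists (N : nat) (V : forall n, X n -> Prop),
      (forall i, O i (V i)) /\ box X N V x /\ (forall y, box X N V y -> W y).

Definition is_poset (D : Type) (le : D -> D -> Prop) : Prop :=
  (forall x, le x x) /\ (forall x y z, le x y -> le y z -> le x z) /\
  (forall x y, le x y -> le y x -> x = y).

Definition directed (D : Type) (le : D -> D -> Prop) (S : D -> Prop) : Prop :=
  (exists d, S d) /\
  forall a b, S a -> S b -> exists c, S c /\ le a c /\ le b c.

Definition is_sup (D : Type) (le : D -> D -> Prop) (S : D -> Prop) (s : D) : Prop :=
  (forall d, S d -> le d s) /\ (forall u, (forall d, S d -> le d u) -> le s u).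

Definition is_dcpo (D : Type) (le : D -> D -> Prop) : Prop :=
  is_poset le /\ forall S, directed le S -> exists s, is_sup le S s.

Definition way_below (D : Type) (le : D -> D -> Prop) (x y : D) : Prop :=
  forall S s, directed le S -> is_sup le S s -> le y s ->
    exists d, S d /\ le x d.

Definition is_continuous_dcpo (D : Type) (le : D -> D -> Prop) : Prop :=
  is_dcpo le /\
  forall x, directed le (fun y => way_below le y x) /\
            is_sup le (fun y => way_below le y x) x.

Definition scott_open (D : Type) (le : D -> D -> Prop) : topology D :=
  fun U => (forall x y, U x -> le x y -> U y) /\
    (forall S s, directed le S -> is_sup le S s -> U s -> exists d, S d /\ U d).

Definition is_closed (X : Type) (O : topology X) (C : X -> Prop) : Prop :=
  O (fun x => ~ C x).

Definition closure_pt (X : Type) (O : topology X) (x : X) : X -> Prop :=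
  fun y => forall C, is_closed O C -> C x -> C y.

Definition irreducible_closed (X : Type) (O : topology X) (C : X -> Prop) : Prop :=
  is_closed O C /\ (exists x, C x) /\
  forall C1 C2, is_closed O C1 -> is_closed O C2 ->
    (forall x, C x -> C1 x \/ C2 x) ->
    (forall x, C x -> C1 x) \/ (forall x, C x -> C2 x).

Definition sober (X : Type) (O : topology X) : Prop :=
  forall C, irreducible_closed O C ->
    exists x, (forall y, C y <-> closure_pt O x y) /\
      forall x', (forall y, C y <-> closure_pt O x' y) -> x' = x.

Definition compact (X : Type) (O : topology X) (K : X -> Prop) : Prop :=
  forall F : (X -> Prop) -> Prop, (forall U, F U -> O U) ->
    (forall x, K x -> exists U, F U /\ U x) ->
    exists l : list (X -> Prop), (forall U, In U l -> F U) /\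
      (forall x, K x -> exists U, In U l /\ U x).

Definition saturated (X : Type) (O : topology X) (Q : X -> Prop) : Prop :=
  forall y, (forall U, O U -> (forall z, Q z -> U z) -> U y) -> Q y.

Definition locally_compact (X : Type) (O : topology X) : Prop :=
  forall x U, O U -> U x ->
    exists Q V, compact O Q /\ saturated O Q /\ O V /\ V x /\
      (forall y, V y -> Q y) /\ (forall y, Q y -> U y).

Definition domain_complete (X : Type) (O : topology X) : Prop :=
  exists (D : Type) (le : D -> D -> Prop) (A : D -> Prop),
    is_continuous_dcpo le /\ G_delta (scott_open le) A /\
    homeomorphic O (subspace (scott_open le) A).

Definition LCS_complete (X : Type) (O : topology X) : Prop :=
  exists (Y : Type) (OY : topology Y) (A : Y -> Prop),
    is_topology OY /\ locally_compact OY /\ sober OY /\ G_delta OY A /\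
    homeomorphic O (subspace OY A).
Arguments product_topology : clear implicits.

From Stdlib Require Import List Arith Lia Classical ClassicalEpsilon
  FunctionalExtensionality PropExtensionality ProofIrrelevance Eqdep_dec Cantor.

(* Adding a new least point to each factor embeds it as an open subspace of a space of the
   same kind that has a bottom: a continuous dcpo with least element, resp. a locally compact
   sober space in which the new point has the whole space as its only neighbourhood; the image
   of a G_delta set stays G_delta.  For dcpos with least elements the coordinatewise order on
   the product is a continuous dcpo whose Scott topology is the product topology, because the
   approximants of [y] can be taken finitely supported: way below [y] in finitely many
   coordinates and bottom elsewhere.  For the pointed spaces the product is sober (the generic
   point of an irreducible closed set is the family of generic points of its projections) and
   locally compact (a finite box of compact sets is compact by the tube lemma, the remaining
   factors being compact).  A countable product of G_delta sets is G_delta and a product of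
   embeddings is an embedding. *)

Lemma pred_ext (X : Type) (A B : X -> Prop) : (forall x, A x <-> B x) -> A = B.
Proof.
  intro H. apply functional_extensionality. intro x.
  apply propositional_extensionality. apply H.
Qed.

Lemma dep_choice {I : Type} {T : I -> Type} (P : forall i, T i -> Prop) :
  (forall i, exists t, P i t) -> exists f : forall i, T i, forall i, P i (f i).
Proof.
  intro H. exists (fun i => proj1_sig (constructive_indefinite_description _ (H i))).
  intro i. exact (proj2_sig (constructive_indefinite_description _ (H i))).
Qed.

Definition update {X : nat -> Type} (z : forall n, X n) (k : nat) (t : X k) :
  forall n, X n :=
  fun i => match Nat.eq_dec k i with left e => eq_rect k X t i e | right _ => z i end.

Lemma update_eq {X : nat -> Type} (z : forall n, X n) k t : update z k t k = t.
Proof.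
  unfold update. destruct (Nat.eq_dec k k) as [e|]; [|congruence].
  rewrite (UIP_dec Nat.eq_dec e eq_refl). reflexivity.
Qed.

Lemma update_neq {X : nat -> Type} (z : forall n, X n) k t i :
  k <> i -> update z k t i = z i.
Proof. intro H. unfold update. destruct (Nat.eq_dec k i); [congruence|reflexivity]. Qed.

Section Topology.
Variables (X : Type) (O : topology X).
Hypothesis HO : is_topology O.

Lemma open_full : O (fun _ => True).
Proof. apply HO. Qed.

Lemma open_inter U V : O U -> O V -> O (fun x => U x /\ V x).
Proof. apply HO. Qed.

Lemma open_union (F : (X -> Prop) -> Prop) :
  (forall U, F U -> O U) -> O (fun x => exists U, F U /\ U x).
Proof. apply HO. Qed.

End Topology.

Lemma closed_compl (X : Type) (O : topology X) U : O U -> is_closed O (fun x => ~ U x).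
Proof.
  intro H. unfold is_closed. replace (fun x => ~ ~ U x) with U; auto.
  apply pred_ext. intro; split; [tauto|apply NNPP].
Qed.

Lemma homeomorphic_trans (X Y Z : Type) (OX : topology X) (OY : topology Y)
  (OZ : topology Z) :
  homeomorphic OX OY -> homeomorphic OY OZ -> homeomorphic OX OZ.
Proof.
  intros [f [g [Hgf [Hfg [Hf Hg]]]]] [f' [g' [Hgf' [Hfg' [Hf' Hg']]]]].
  exists (fun x => f' (f x)), (fun z => g (g' z)). split; [|split; [|split]].
  - intro x. rewrite Hgf'. auto.
  - intro z. rewrite Hfg. auto.
  - intros V HV. apply (Hf (fun y => V (f' y))). auto.
  - intros V HV. apply (Hg' (fun y => V (g y))). auto.
Qed.

Section ProductTopology.
Variables (X : nat -> Type) (O : forall n, topology (X n)).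
Notation P := (product_topology X O).

Lemma box_open N (V : forall n, X n -> Prop) : (forall i, O i (V i)) -> P (box X N V).
Proof. intros HV x Hx. exists N, V. auto. Qed.

Hypothesis HO : forall n, is_topology (O n).

Lemma proj_open n U : O n U -> P (fun y => U (y n)).
Proof.
  intros HU x Hx.
  set (V := update (X := fun i => X i -> Prop) (fun _ _ => True) n U).
  exists (S n), V. split; [|split].
  - intro i. unfold V. destruct (Nat.eq_dec n i) as [<-|Hne].
    + rewrite update_eq. exact HU.
    + rewrite update_neq by exact Hne. apply open_full, HO.
  - intros i Hi. unfold V. destruct (Nat.eq_dec n i) as [<-|Hne].
    + rewrite update_eq. exact Hx.
    + rewrite update_neq by exact Hne. exact I.
  - intros y Hy. specialize (Hy n (Nat.lt_succ_diag_r n)).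
    unfold V in Hy. rewrite update_eq in Hy. exact Hy.
Qed.

Lemma proj_closed n K : is_closed (O n) K -> is_closed P (fun y => K (y n)).
Proof. apply (proj_open n (fun a => ~ K a)). Qed.

Definition trunc (N : nat) (V : forall n, X n -> Prop) : forall n, X n -> Prop :=
  fun i => if Nat.ltb i N then V i else (fun _ => True).

Lemma trunc_open N (V : forall n, X n -> Prop) :
  (forall i, O i (V i)) -> forall i, O i (trunc N V i).
Proof. intros H i. unfold trunc. destruct (Nat.ltb i N); auto. apply open_full, HO. Qed.

Lemma trunc_lt N V i a : i < N -> trunc N V i a = V i a.
Proof. intro H. unfold trunc. rewrite (proj2 (Nat.ltb_lt i N) H). reflexivity. Qed.

Lemma trunc_ge N V i a : N <= i -> trunc N V i a = True.
Proof. intro H. unfold trunc. rewrite (proj2 (Nat.ltb_ge i N) H). reflexivity. Qed.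

Lemma box_trunc N V y : box X N V y -> forall M i, i < M -> trunc N V i (y i).
Proof.
  intros H M i _. destruct (lt_dec i N).
  - rewrite trunc_lt by assumption. auto.
  - rewrite trunc_ge by lia. exact I.
Qed.

Lemma trunc_box N V M y : N <= M -> box X M (trunc N V) y -> box X N V y.
Proof. intros HNM H i Hi. rewrite <- (trunc_lt N V i (y i) Hi). apply H. lia. Qed.

Lemma product_is_topology : is_topology P.
Proof.
  split; [|split].
  - intros x _. exists 0, (fun _ _ => True).
    split; [intro; apply open_full, HO|split; [intros i Hi; lia|auto]].
  - intros U V HU HV x [Ux Vx].
    destruct (HU x Ux) as [N1 [V1 [HV1 [Hb1 Hs1]]]].
    destruct (HV x Vx) as [N2 [V2 [HV2 [Hb2 Hs2]]]].
    exists (Nat.max N1 N2), (fun i a => trunc N1 V1 i a /\ trunc N2 V2 i a).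
    split; [|split].
    + intro i. apply open_inter; auto; apply trunc_open; auto.
    + intros i Hi. split; eapply box_trunc; eauto.
    + intros y Hy. split.
      * apply Hs1, (trunc_box N1 V1 (Nat.max N1 N2)); [lia|]. intros i Hi. apply Hy, Hi.
      * apply Hs2, (trunc_box N2 V2 (Nat.max N1 N2)); [lia|]. intros i Hi. apply Hy, Hi.
  - intros F HF x [U [FU Ux]]. destruct (HF U FU x Ux) as [N [V [HV [Hb Hs]]]].
    exists N, V. split; [auto|split; auto]. intros y Hy. exists U; auto.
Qed.

End ProductTopology.

Definition prod_pred {Y : nat -> Type} (A : forall n, Y n -> Prop) (y : forall n, Y n) : Prop :=
  forall n, A n (y n).

Lemma G_delta_prod (Y : nat -> Type) (OY : forall n, topology (Y n))
  (A : forall n, Y n -> Prop) :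
  (forall n, is_topology (OY n)) -> (forall n, G_delta (OY n) (A n)) ->
  G_delta (product_topology Y OY) (prod_pred A).
Proof.
  intros HT HG.
  destruct (dep_choice (T := fun n => nat -> Y n -> Prop)
    (fun n U => (forall k, OY n (U k)) /\ forall x, A n x <-> (forall k, U k x)) HG)
    as [U HU].
  (* The Cantor pairing [of_nat] enumerates the doubly indexed family [U n k]. *)
  exists (fun m (y : forall n, Y n) => U (fst (of_nat m)) (snd (of_nat m)) (y (fst (of_nat m)))).
  split.
  - intro m. apply proj_open; [exact HT|apply HU].
  - intro y. split.
    + intros Hy m. apply HU, Hy.
    + intros Hy n. apply (proj2 (HU n)). intro k.
      specialize (Hy (to_nat (n, k))). rewrite cancel_of_to in Hy. exact Hy.
Qed.

Lemma prod_map_continuous (X Y : nat -> Type) (OX : forall n, topology (X n))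
  (OY : forall n, topology (Y n)) (f : forall n, X n -> Y n) :
  (forall n, continuous (OX n) (OY n) (f n)) ->
  continuous (product_topology X OX) (product_topology Y OY) (fun x n => f n (x n)).
Proof.
  intros Hf W HW x Hx. destruct (HW _ Hx) as [N [V [HV [Hb Hs]]]].
  exists N, (fun i a => V i (f i a)). split; [|split].
  - intro i. apply Hf, HV.
  - exact Hb.
  - intros y Hy. apply Hs, Hy.
Qed.

Lemma homeomorphic_prod (X Y : nat -> Type) (OX : forall n, topology (X n))
  (OY : forall n, topology (Y n)) :
  (forall n, homeomorphic (OX n) (OY n)) ->
  homeomorphic (product_topology X OX) (product_topology Y OY).
Proof.
  intro H.
  destruct (dep_choice (T := fun n => ((X n -> Y n) * (Y n -> X n))%type)
    (fun n fg => (forall x, snd fg (fst fg x) = x) /\ (forall y, fst fg (snd fg y) = y) /\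
       continuous (OX n) (OY n) (fst fg) /\ continuous (OY n) (OX n) (snd fg)))
    as [fg Hfg].
  { intro n. destruct (H n) as [f [g Hfg]]. exists (f, g). exact Hfg. }
  exists (fun x n => fst (fg n) (x n)), (fun y n => snd (fg n) (y n)).
  split; [|split; [|split]].
  - intro x. apply functional_extensionality_dep. intro n. apply Hfg.
  - intro y. apply functional_extensionality_dep. intro n. apply Hfg.
  - apply prod_map_continuous. intro n. apply Hfg.
  - apply prod_map_continuous. intro n. apply Hfg.
Qed.

Lemma homeomorphic_prod_subspace (Y : nat -> Type) (OY : forall n, topology (Y n))
  (A : forall n, Y n -> Prop) :
  homeomorphic
    (product_topology (fun n => {y : Y n | A n y}) (fun n => subspace (OY n) (A n)))
    (subspace (product_topology Y OY) (prod_pred A)).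
Proof.
  set (F := fun x : forall n, {y : Y n | A n y} =>
    exist (prod_pred A) (fun n => proj1_sig (x n)) (fun n => proj2_sig (x n))).
  set (G := fun (y : {y | prod_pred A y}) n => exist (A n) (proj1_sig y n) (proj2_sig y n)).
  exists F, G. split; [|split; [|split]].
  - intro x. apply functional_extensionality_dep. intro n. unfold F, G; simpl.
    destruct (x n); reflexivity.
  - intros [y Hy]. reflexivity.
  - intros V [U [HU HVU]] x Hx. apply HVU in Hx.
    destruct (HU _ Hx) as [N [W [HW [Hb Hs]]]].
    exists N, (fun i a => W i (proj1_sig a)). split; [|split].
    + intro i. exists (W i). split; [apply HW|]. intro; reflexivity.
    + exact Hb.
    + intros z Hz. apply HVU, Hs, Hz.
  - intros W HW.
    exists (fun z => exists N V, (forall i, OY i (V i)) /\ box Y N V z /\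
      forall y : {y | prod_pred A y}, box Y N V (proj1_sig y) -> W (G y)).
    split.
    + intros z [N [V [HV [Hb Hs]]]]. exists N, V.
      split; [auto|split; [auto|]]. intros z' Hz'. exists N, V. auto.
    + intro y. split.
      * intro Hy. destruct (HW _ Hy) as [N [V [HV [Hb Hs]]]].
        destruct (dep_choice (T := fun i => Y i -> Prop)
          (fun i V' => OY i V' /\ forall b, V i b <-> V' (proj1_sig b)) HV) as [V' HV'].
        exists N, V'. split; [intro i; apply HV'|split].
        -- intros i Hi. apply (proj2 (HV' i) (G y i)), Hb, Hi.
        -- intros y' Hy'. apply Hs. intros i Hi. apply (proj2 (HV' i) (G y' i)), Hy', Hi.
      * intros [N [V [_ [Hb Hs]]]]. apply Hs, Hb.
Qed.

Lemma homeomorphic_prod_embedding (X Y : nat -> Type) (OX : forall n, topology (X n))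
  (OY : forall n, topology (Y n)) (A : forall n, Y n -> Prop) :
  (forall n, homeomorphic (OX n) (subspace (OY n) (A n))) ->
  homeomorphic (product_topology X OX) (subspace (product_topology Y OY) (prod_pred A)).
Proof.
  intro H. eapply homeomorphic_trans;
    [apply homeomorphic_prod, H|apply homeomorphic_prod_subspace].
Qed.

Section OpenEmbedding.
Variables (Y Z : Type) (OY : topology Y) (OZ : topology Z) (e : Y -> Z).
Hypothesis e_initial : forall U, OY U -> exists U', OZ U' /\ forall y, U y <-> U' (e y).
Hypothesis e_continuous : continuous OY OZ e.
Hypothesis e_open_range : OZ (fun z => exists y, z = e y).
Hypothesis e_injective : forall y y', e y = e y' -> y = y'.

Definition image (A : Y -> Prop) (z : Z) : Prop := exists y, z = e y /\ A y.

Lemma G_delta_image A : G_delta OY A -> G_delta OZ (image A).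
Proof.
  intros [U [HU HAU]].
  destruct (dep_choice (T := fun _ : nat => Z -> Prop)
    (fun k U' => OZ U' /\ forall y, U k y <-> U' (e y))) as [U' HU'].
  { intro k. apply e_initial, HU. }
  exists (fun k => match k with 0 => fun z => exists y, z = e y | S k => U' k end).
  split.
  - intros [|k]; [exact e_open_range|apply HU'].
  - intro z. split.
    + intros [y [-> Hy]] [|k]; [eauto|]. apply HU', HAU, Hy.
    + intro Hz. destruct (Hz 0) as [y ->]. exists y. split; [reflexivity|].
      apply HAU. intro k. apply HU', (Hz (S k)).
Qed.

Lemma homeomorphic_image A : homeomorphic (subspace OY A) (subspace OZ (image A)).
Proof.
  set (F := fun y : {y | A y} =>
    exist (image A) (e (proj1_sig y)) (ex_intro _ (proj1_sig y) (conj eq_refl (proj2_sig y)))).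
  set (w := fun z : {z | image A z} => constructive_indefinite_description _ (proj2_sig z)).
  set (G := fun z : {z | image A z} => exist A (proj1_sig (w z)) (proj2 (proj2_sig (w z)))).
  assert (HG : forall z, e (proj1_sig (G z)) = proj1_sig z).
  { intro z. symmetry. apply (proj1 (proj2_sig (w z))). }
  exists F, G. split; [|split; [|split]].
  - intro y. apply eq_sig_hprop; [intros; apply proof_irrelevance|].
    apply e_injective. rewrite HG. reflexivity.
  - intro z. apply eq_sig_hprop; [intros; apply proof_irrelevance|]. apply HG.
  - intros V [U' [HU' HV]]. exists (fun y => U' (e y)).
    split; [apply e_continuous, HU'|]. intro y. apply HV.
  - intros V [U [HU HV]]. destruct (e_initial U HU) as [U' [HU' HUU']].
    exists U'. split; [exact HU'|]. intro z. rewrite HV, HUU', HG. reflexivity.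
Qed.

End OpenEmbedding.

Arguments image {Y Z} e A z.

Definition lift_set {Y : Type} (U : Y -> Prop) (o : option Y) : Prop :=
  match o with Some a => U a | None => False end.

Lemma range_Some (Y : Type) : (fun z : option Y => exists y, z = Some y) = lift_set (fun _ => True).
Proof.
  apply pred_ext. intros [y|]; simpl; split; eauto.
  - intros [y Hy]; discriminate.
  - intros [].
Qed.

Lemma lift_embedding_transfer (X Y : Type) (OX : topology X) (OY : topology Y)
  (OL : topology (option Y)) (A : Y -> Prop) :
  is_topology OY -> (forall U, OY U -> OL (lift_set U)) -> continuous OY OL Some ->
  G_delta OY A -> homeomorphic OX (subspace OY A) ->
  G_delta OL (image Some A) /\ homeomorphic OX (subspace OL (image Some A)).
Proof.
  intros HT Hopen Hcont HG HH.
  assert (Hinit : forall U, OY U -> exists U', OL U' /\ forall y, U y <-> U' (Some y)).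
  { intros U HU. exists (lift_set U). split; [auto|reflexivity]. }
  split.
  - apply (G_delta_image Y (option Y) OY OL Some Hinit); [|exact HG].
    rewrite range_Some. apply Hopen, open_full, HT.
  - eapply homeomorphic_trans; [exact HH|].
    apply homeomorphic_image; [exact Hinit|exact Hcont|congruence].
Qed.

Section Poset.
Context {D : Type} {le : D -> D -> Prop}.
Hypothesis Hpo : is_poset le.

Lemma poset_refl x : le x x.
Proof. apply Hpo. Qed.

Lemma poset_trans {x y z} : le x y -> le y z -> le x z.
Proof. apply Hpo. Qed.

Lemma poset_antisym {x y} : le x y -> le y x -> x = y.
Proof. apply Hpo. Qed.

Lemma is_sup_unique {S s s'} : is_sup le S s -> is_sup le S s' -> s = s'.
Proof. intros [Hub Hl] [Hub' Hl']. apply poset_antisym; auto. Qed.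

Lemma directed_singleton y : directed le (fun z => z = y).
Proof.
  split; [exists y; reflexivity|]. intros a b -> ->. exists y.
  split; [reflexivity|split; apply poset_refl].
Qed.

Lemma is_sup_singleton y : is_sup le (fun z => z = y) y.
Proof. split; [intros d ->; apply poset_refl|intros u Hu; apply Hu; reflexivity]. Qed.

Lemma way_below_le {x y} : way_below le x y -> le x y.
Proof.
  intro H.
  destruct (H _ _ (directed_singleton y) (is_sup_singleton y) (poset_refl y)) as [d [-> Hd]].
  exact Hd.
Qed.

Lemma way_below_le_trans {x y z} : way_below le x y -> le y z -> way_below le x z.
Proof. intros H Hyz S s HS Hs Hzs. apply (H S s HS Hs). eapply poset_trans; eauto. Qed.

Lemma le_way_below_trans {x y z} : le x y -> way_below le y z -> way_below le x z.
Proof.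
  intros Hxy H S s HS Hs Hzs. destruct (H S s HS Hs Hzs) as [d [Sd Hd]].
  exists d. split; [exact Sd|]. eapply poset_trans; eauto.
Qed.

Lemma directed_finite_ub S (h : nat -> D) N : directed le S ->
  (forall i, i < N -> S (h i)) -> exists d, S d /\ forall i, i < N -> le (h i) d.
Proof.
  intros [[d0 Hd0] Hdir]. induction N as [|N IH]; intros HS.
  - exists d0. split; [exact Hd0|]. intros; lia.
  - destruct IH as [d [Sd Hd]]; [intros; apply HS; lia|].
    destruct (Hdir d (h N) Sd (HS N (Nat.lt_succ_diag_r N))) as [c [Sc [H1 H2]]].
    exists c. split; [exact Sc|]. intros i Hi.
    destruct (Nat.eq_dec i N) as [->|]; [exact H2|].
    eapply poset_trans; [apply Hd; lia|exact H1].
Qed.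

End Poset.

Lemma way_below_least (D : Type) (le : D -> D -> Prop) b y :
  (forall z, le b z) -> way_below le b y.
Proof. intros Hb S s [[d Hd] _] _ _. exists d. auto. Qed.

Section ContinuousDcpo.
Context {D : Type} {le : D -> D -> Prop}.
Hypothesis Hc : is_continuous_dcpo le.
Let Hpo : is_poset le := proj1 (proj1 Hc).

Lemma way_below_interpolate {x y} :
  way_below le x y -> exists d, way_below le x d /\ way_below le d y.
Proof.
  intro Hxy.
  (* [y] is the directed supremum of all [c] with [c << d << y] for some [d]. *)
  set (T := fun c => exists d, way_below le c d /\ way_below le d y).
  assert (HT : directed le T).
  { destruct (proj2 Hc y) as [[[d Hd] Hdir] _].
    split.
    - destruct (proj2 Hc d) as [[[c Hcd] _] _]. exists c, d. auto.
    - intros a b [d1 [H1 H1']] [d2 [H2 H2']].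
      destruct (Hdir d1 d2 H1' H2') as [d3 [H3 [L1 L2]]].
      destruct (proj1 (proj2 Hc d3)) as [_ Hdir3].
      destruct (Hdir3 a b (way_below_le_trans Hpo H1 L1) (way_below_le_trans Hpo H2 L2))
        as [c [Hc3 [La Lb]]].
      exists c. split; [exists d3; auto|auto]. }
  assert (Hs : is_sup le T y).
  { split.
    - intros c [d [H1 H2]].
      apply (poset_trans Hpo (y := d)); apply (way_below_le Hpo); auto.
    - intros u Hu. apply (proj2 (proj2 (proj2 Hc y))). intros d Hd.
      apply (proj2 (proj2 (proj2 Hc d))). intros c Hcd. apply Hu. exists d; auto. }
  destruct (Hxy T y HT Hs (poset_refl Hpo y)) as [c [[d [H1 H2]] Hxc]].
  exists d. split; [|exact H2]. eapply le_way_below_trans; eauto.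
Qed.

Lemma scott_open_way_below_up x : scott_open le (way_below le x).
Proof.
  split.
  - intros a b Ha Hab. eapply way_below_le_trans; eauto.
  - intros S s HS Hs Hxs. destruct (way_below_interpolate Hxs) as [d [H1 H2]].
    destruct (H2 S s HS Hs (poset_refl Hpo s)) as [e [Se He]].
    exists e. split; [exact Se|]. eapply way_below_le_trans; eauto.
Qed.

End ContinuousDcpo.

Lemma scott_is_topology (D : Type) (le : D -> D -> Prop) : is_topology (scott_open le).
Proof.
  split; [|split].
  - split; [auto|]. intros S s [[d Hd] _] _ _. exists d. auto.
  - intros U V [HU1 HU2] [HV1 HV2]. split.
    + intros x y [H1 H2] Hxy. split; eauto.
    + intros S s HS Hs [H1 H2].
      destruct (HU2 S s HS Hs H1) as [d1 [S1 U1]].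
      destruct (HV2 S s HS Hs H2) as [d2 [S2 V2]].
      destruct (proj2 HS d1 d2 S1 S2) as [d [Sd [L1 L2]]].
      exists d. split; [|split]; eauto.
  - intros F HF. split.
    + intros x y [U [FU Ux]] Hxy. exists U. split; [exact FU|]. eapply (proj1 (HF U FU)); eauto.
    + intros S s HS Hs [U [FU Us]].
      destruct (proj2 (HF U FU) S s HS Hs Us) as [d [Sd Ud]].
      exists d. split; [exact Sd|]. exists U. auto.
Qed.

Definition lift_le {D : Type} (le : D -> D -> Prop) (x y : option D) : Prop :=
  match x, y with
  | None, _ => True
  | Some a, Some b => le a b
  | Some _, None => False
  end.

Section LiftDcpo.
Context {D : Type} {le : D -> D -> Prop}.
Notation L := (lift_le le).

Lemma lift_poset : is_poset le -> is_poset L.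
Proof.
  intro Hpo. split; [|split].
  - intros [a|]; simpl; auto. apply (poset_refl Hpo).
  - intros [a|] [b|] [c|]; simpl; try tauto. apply (poset_trans Hpo).
  - intros [a|] [b|]; simpl; try tauto. intros; f_equal; apply (poset_antisym Hpo); auto.
Qed.

Lemma lift_sup_Some {S s} : directed L S -> is_sup L S (Some s) ->
  (exists a, S (Some a)) /\ is_sup le (fun a => S (Some a)) s.
Proof.
  intros _ [Hub Hl]. split.
  - apply NNPP. intro Hn. apply (Hl None). intros [d|] Hd; simpl; auto. apply Hn; eauto.
  - split.
    + intros a Ha. apply (Hub _ Ha).
    + intros u Hu. apply (Hl (Some u)). intros [d|] Hd; simpl; auto.
Qed.

Lemma lift_directed_Some {S} : directed L S -> (exists a, S (Some a)) ->
  directed le (fun a => S (Some a)).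
Proof.
  intros [_ Hdir] Hne. split; [exact Hne|]. intros a b Ha Hb.
  destruct (Hdir _ _ Ha Hb) as [[c|] [Hc [H1 H2]]]; simpl in *; try tauto.
  exists c. auto.
Qed.

Lemma directed_lift_image {S} : directed le S -> directed L (image Some S).
Proof.
  intros [[d Hd] Hdir]. split; [exists (Some d), d; auto|].
  intros x y [a [-> Ha]] [b [-> Hb]]. destruct (Hdir a b Ha Hb) as [c [Hc [H1 H2]]].
  exists (Some c). split; [exists c|]; auto.
Qed.

Lemma is_sup_lift_image {S s} : directed le S -> is_sup le S s ->
  is_sup L (image Some S) (Some s).
Proof.
  intros [[d Hd] _] [Hub Hl]. split.
  - intros x [a [-> Ha]]. simpl. auto.
  - intros [u|] Hu; simpl.
    + apply Hl. intros a Ha. apply (Hu (Some a)). exists a. auto.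
    + apply (Hu (Some d)). exists d. auto.
Qed.

Lemma lift_way_below_Some a b : way_below L (Some a) (Some b) <-> way_below le a b.
Proof.
  split.
  - intros H S s HS Hs Hbs.
    destruct (H _ _ (directed_lift_image HS) (is_sup_lift_image HS Hs) Hbs)
      as [d [[c [-> Hc]] Hac]].
    exists c. auto.
  - intros H S [s|] HS Hs Hbs; simpl in Hbs; try tauto.
    destruct (lift_sup_Some HS Hs) as [Hne Hs'].
    destruct (H _ _ (lift_directed_Some HS Hne) Hs' Hbs) as [d [Hd Had]].
    exists (Some d). auto.
Qed.

Lemma lift_way_below_None x : way_below L x None -> x = None.
Proof.
  intro Hx. destruct (Hx (fun z => z = None) None) as [d [-> Hd]].
  - split; [exists None; reflexivity|]. intros a b -> ->. exists None. simpl; auto.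
  - split; [intros d ->; simpl; auto|]. intros u Hu. apply Hu. reflexivity.
  - simpl. auto.
  - destruct x; simpl in Hd; tauto.
Qed.

Lemma way_below_lift_None y : way_below L None y.
Proof. apply way_below_least. simpl. auto. Qed.

Hypothesis Hc : is_continuous_dcpo le.

Lemma lift_directed_sup S : directed L S -> exists s, is_sup L S s.
Proof.
  intros HS. destruct (classic (exists a, S (Some a))) as [Hne|Hne].
  - destruct (proj2 (proj1 Hc) _ (lift_directed_Some HS Hne)) as [s [Hub Hl]].
    exists (Some s). split.
    + intros [d|] Hd; simpl; auto.
    + intros [u|] Hu; simpl.
      * apply Hl. intros a Ha. apply (Hu _ Ha).
      * destruct Hne as [a Ha]. apply (Hu _ Ha).
  - exists None. split.
    + intros [d|] Hd; simpl; auto. apply Hne; eauto.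
    + intros; simpl; auto.
Qed.

Lemma lift_approximation_Some b :
  directed L (fun x => way_below L x (Some b)) /\
  is_sup L (fun x => way_below L x (Some b)) (Some b).
Proof.
  destruct (proj2 Hc b) as [[[a0 Ha0] Hdir] [Hub Hl]].
  split; [split|split].
  - exists None. apply way_below_lift_None.
  - intros [x|] [y|] Hx Hy.
    + apply lift_way_below_Some in Hx, Hy.
      destruct (Hdir _ _ Hx Hy) as [c [Hcb [H1 H2]]].
      exists (Some c). split; [apply lift_way_below_Some; auto|simpl; auto].
    + exists (Some x). split; [exact Hx|].
      split; simpl; auto. apply (poset_refl (proj1 (proj1 Hc))).
    + exists (Some y). split; [exact Hy|].
      split; simpl; auto. apply (poset_refl (proj1 (proj1 Hc))).
    + exists None. split; simpl; auto.
  - intros [x|] Hx; simpl; auto. apply lift_way_below_Some in Hx. apply Hub, Hx.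
  - intros [u|] Hu; simpl.
    + apply Hl. intros d Hd. apply (Hu (Some d)). apply lift_way_below_Some, Hd.
    + apply (Hu (Some a0)). apply lift_way_below_Some, Ha0.
Qed.

Lemma lift_continuous_dcpo : is_continuous_dcpo L.
Proof.
  split; [split; [apply lift_poset, Hc|apply lift_directed_sup]|].
  intros [b|]; [apply lift_approximation_Some|].
  split; [split|split].
  - exists None. apply way_below_lift_None.
  - intros x y Hx Hy. exists None.
    rewrite (lift_way_below_None x Hx), (lift_way_below_None y Hy).
    split; [apply way_below_lift_None|simpl; auto].
  - intros x Hx. rewrite (lift_way_below_None x Hx). simpl; auto.
  - intros; simpl; auto.
Qed.

End LiftDcpo.

Lemma lift_scott_open (D : Type) (le : D -> D -> Prop) U :
  scott_open le U -> scott_open (lift_le le) (lift_set U).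
Proof.
  intros [Hup Hsup]. split.
  - intros [a|] [b|]; simpl; try tauto. apply Hup.
  - intros S [s|] HS Hs Hu; simpl in Hu; try tauto.
    destruct (lift_sup_Some HS Hs) as [Hne Hs'].
    destruct (Hsup _ _ (lift_directed_Some HS Hne) Hs' Hu) as [d [Hd Hud]].
    exists (Some d). auto.
Qed.

Lemma scott_continuous_Some (D : Type) (le : D -> D -> Prop) :
  continuous (scott_open le) (scott_open (lift_le le)) Some.
Proof.
  intros U' [Hup Hsup]. split.
  - intros a b Ha Hab. apply (Hup (Some a) (Some b)); auto.
  - intros S s HS Hs Hu.
    destruct (Hsup _ _ (directed_lift_image HS) (is_sup_lift_image HS Hs) Hu)
      as [o [[a [-> Ha]] Ho]].
    exists a. auto.
Qed.

Section ProductDcpo.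
Variables (E : nat -> Type) (le : forall n, E n -> E n -> Prop) (bot : forall n, E n).
Hypothesis Hc : forall n, is_continuous_dcpo (le n).
Hypothesis Hbot : forall n x, le n (bot n) x.

Definition prod_le (x y : forall n, E n) : Prop := forall n, le n (x n) (y n).

Definition coord_image (S : (forall n, E n) -> Prop) (i : nat) (a : E i) : Prop :=
  exists z, S z /\ z i = a.

Lemma prod_le_poset : is_poset prod_le.
Proof.
  split; [|split].
  - intros x n. apply (poset_refl (proj1 (proj1 (Hc n)))).
  - intros x y z H1 H2 n. eapply (poset_trans (proj1 (proj1 (Hc n)))); eauto.
  - intros x y H1 H2. apply functional_extensionality_dep. intro n.
    apply (poset_antisym (proj1 (proj1 (Hc n)))); auto.
Qed.

Lemma directed_coord_image S i : directed prod_le S -> directed (le i) (coord_image S i).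
Proof.
  intros [[d Hd] Hdir]. split; [exists (d i), d; auto|].
  intros a b [z [Hz <-]] [z' [Hz' <-]]. destruct (Hdir z z' Hz Hz') as [c [Hcs [H1 H2]]].
  exists (c i). split; [exists c; auto|auto].
Qed.

Lemma is_sup_prod S s : (forall i, is_sup (le i) (coord_image S i) (s i)) -> is_sup prod_le S s.
Proof.
  intro H. split.
  - intros d Hd i. apply (proj1 (H i)). exists d. auto.
  - intros u Hu i. apply (proj2 (H i)). intros a [z [Hz <-]]. apply Hu, Hz.
Qed.

Lemma prod_directed_sup S : directed prod_le S ->
  exists s, forall i, is_sup (le i) (coord_image S i) (s i).
Proof.
  intro HS. apply (dep_choice (fun i a => is_sup (le i) (coord_image S i) a)). intro i.
  apply (proj2 (proj1 (Hc i))), directed_coord_image, HS.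
Qed.

Lemma is_sup_prod_coord S s : directed prod_le S -> is_sup prod_le S s ->
  forall i, is_sup (le i) (coord_image S i) (s i).
Proof.
  intros HS Hs. destruct (prod_directed_sup S HS) as [s' Hs'].
  rewrite (is_sup_unique prod_le_poset Hs (is_sup_prod S s' Hs')). exact Hs'.
Qed.

Lemma directed_gather S N (P : forall i, E i -> Prop) : directed prod_le S ->
  (forall i, i < N -> exists z, S z /\ P i (z i)) ->
  (forall i a b, P i a -> le i a b -> P i b) ->
  exists d, S d /\ forall i, i < N -> P i (d i).
Proof.
  intros HS H Hup.
  destruct (dep_choice (T := fun _ : nat => forall n, E n)
    (fun i z => S z /\ (i < N -> P i (z i)))) as [h Hh].
  { intro i. destruct (lt_dec i N) as [Hi|Hi].
    - destruct (H i Hi) as [z Hz]. exists z. tauto.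
    - destruct (proj1 HS) as [d Hd]. exists d. split; [exact Hd|lia]. }
  destruct (directed_finite_ub prod_le_poset S h N HS (fun i _ => proj1 (Hh i)))
    as [d [Sd Hd]].
  exists d. split; [exact Sd|]. intros i Hi. apply Hup with (h i i); [apply Hh|apply Hd]; auto.
Qed.

Definition basic_approx (y x : forall n, E n) : Prop :=
  exists N, (forall i, i < N -> way_below (le i) (x i) (y i)) /\
            (forall i, N <= i -> x i = bot i).

Lemma basic_approx_way_below y x : basic_approx y x -> way_below prod_le x y.
Proof.
  intros [N [H1 H2]] S s HS Hs Hys.
  pose proof (is_sup_prod_coord S s HS Hs) as Hsi.
  destruct (directed_gather S N (fun i a => le i (x i) a) HS) as [d [Sd Hd]].
  - intros i Hi.
    destruct (H1 i Hi _ _ (directed_coord_image S i HS) (Hsi i) (Hys i))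
      as [a [[z [Hz <-]] Ha]].
    exists z. auto.
  - intros i a b H3 H4. eapply (poset_trans (proj1 (proj1 (Hc i)))); eauto.
  - exists d. split; [exact Sd|]. intro i. destruct (lt_dec i N); auto.
    rewrite H2 by lia. apply Hbot.
Qed.

Lemma basic_approx_way_below_coord y x i : basic_approx y x -> way_below (le i) (x i) (y i).
Proof.
  intros [N [H1 H2]]. destruct (lt_dec i N); auto.
  rewrite H2 by lia. apply way_below_least, Hbot.
Qed.

Lemma basic_approx_directed y : directed prod_le (basic_approx y).
Proof.
  split; [exists bot, 0; split; intros; [lia|reflexivity]|].
  intros a b Ha Hb.
  destruct (dep_choice (T := E)
    (fun i c => way_below (le i) c (y i) /\ le i (a i) c /\ le i (b i) c)) as [c Hcc].
  { intro i. apply (proj2 (proj1 (proj2 (Hc i) (y i))));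
      apply basic_approx_way_below_coord; assumption. }
  destruct Ha as [N1 [_ Ha2]], Hb as [N2 [_ Hb2]].
  set (M := Nat.max N1 N2).
  exists (fun i => if Nat.ltb i M then c i else bot i). split; [|split].
  - exists M. split.
    + intros i Hi. rewrite (proj2 (Nat.ltb_lt i M) Hi). apply Hcc.
    + intros i Hi. rewrite (proj2 (Nat.ltb_ge i M) Hi). reflexivity.
  - intro i. destruct (Nat.ltb i M) eqn:Hi; [apply Hcc|].
    apply Nat.ltb_ge in Hi. rewrite Ha2 by lia. apply Hbot.
  - intro i. destruct (Nat.ltb i M) eqn:Hi; [apply Hcc|].
    apply Nat.ltb_ge in Hi. rewrite Hb2 by lia. apply Hbot.
Qed.

Lemma basic_approx_sup y : is_sup prod_le (basic_approx y) y.
Proof.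
  split.
  - intros x Hx i. apply (way_below_le (proj1 (proj1 (Hc i)))).
    apply basic_approx_way_below_coord, Hx.
  - intros u Hu i. apply (proj2 (proj2 (proj2 (Hc i) (y i)))). intros c Hcy.
    assert (HB : basic_approx y (update bot i c)).
    { exists (S i). split.
      - intros j Hj. destruct (Nat.eq_dec i j) as [<-|Hne].
        + rewrite update_eq. exact Hcy.
        + rewrite update_neq by exact Hne. apply way_below_least, Hbot.
      - intros j Hj. apply update_neq. lia. }
    specialize (Hu _ HB i). rewrite update_eq in Hu. exact Hu.
Qed.

Lemma prod_continuous_dcpo : is_continuous_dcpo prod_le.
Proof.
  split; [split; [apply prod_le_poset|]|].
  - intros S HS. destruct (prod_directed_sup S HS) as [s Hs].
    exists s. apply is_sup_prod, Hs.
  - intro y. split; [split|split].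
    + exists bot. apply basic_approx_way_below. exists 0.
      split; intros; [lia|reflexivity].
    + intros a b Ha Hb.
      destruct (Ha _ _ (basic_approx_directed y) (basic_approx_sup y)
        (poset_refl prod_le_poset y)) as [a' [Ha' La]].
      destruct (Hb _ _ (basic_approx_directed y) (basic_approx_sup y)
        (poset_refl prod_le_poset y)) as [b' [Hb' Lb]].
      destruct (proj2 (basic_approx_directed y) _ _ Ha' Hb') as [c [Hcy [L1 L2]]].
      exists c. split; [apply basic_approx_way_below, Hcy|].
      split; eapply (poset_trans prod_le_poset); eauto.
    + intros x Hx. apply (way_below_le prod_le_poset Hx).
    + intros u Hu. apply (proj2 (basic_approx_sup y)). intros x Hx.
      apply Hu, basic_approx_way_below, Hx.
Qed.

(* The pointedness of the factors makes the Scott topology of the product the product of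
   the Scott topologies. *)
Lemma scott_open_prod W :
  scott_open prod_le W <-> product_topology E (fun n => scott_open (le n)) W.
Proof.
  split.
  - intros [Hup Hsup] y Hy.
    destruct (Hsup _ _ (basic_approx_directed y) (basic_approx_sup y) Hy)
      as [x [[N [H1 H2]] Hx]].
    exists N, (fun i => way_below (le i) (x i)). split; [|split].
    + intro i. apply scott_open_way_below_up, Hc.
    + exact H1.
    + intros z Hz. apply Hup with x; [exact Hx|]. intro i. destruct (lt_dec i N).
      * apply (way_below_le (proj1 (proj1 (Hc i)))), Hz. assumption.
      * rewrite H2 by lia. apply Hbot.
  - intro HW. split.
    + intros x y Hx Hxy. destruct (HW x Hx) as [N [V [HV [Hb Hs]]]]. apply Hs.
      intros i Hi. apply (proj1 (HV i) (x i)); auto.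
    + intros S s HS Hs Hws. destruct (HW s Hws) as [N [V [HV [Hb Hsub]]]].
      pose proof (is_sup_prod_coord S s HS Hs) as Hsi.
      destruct (directed_gather S N V HS) as [d [Sd Hd]].
      * intros i Hi.
        destruct (proj2 (HV i) _ _ (directed_coord_image S i HS) (Hsi i) (Hb i Hi))
          as [a [[z [Hz <-]] Ha]].
        exists z. auto.
      * intros i a b H1 H2. apply (proj1 (HV i) a b); auto.
      * exists d. split; [exact Sd|]. apply Hsub. exact Hd.
Qed.

End ProductDcpo.

Lemma domain_complete_prod (X : nat -> Type) (O : forall n, topology (X n)) :
  (forall n, domain_complete (O n)) -> domain_complete (product_topology X O).
Proof.
  intro HD.
  destruct (dep_choice (T := fun _ => {D : Type & ((D -> D -> Prop) * (D -> Prop))%type})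
    (fun n p => is_continuous_dcpo (fst (projT2 p)) /\
       G_delta (scott_open (fst (projT2 p))) (snd (projT2 p)) /\
       homeomorphic (O n) (subspace (scott_open (fst (projT2 p))) (snd (projT2 p)))))
    as [p Hp].
  { intro n. destruct (HD n) as [D [le [A H]]]. exists (existT _ D (le, A)). exact H. }
  set (L := fun n => option (projT1 (p n))).
  set (leL := fun n => lift_le (fst (projT2 (p n))) : L n -> L n -> Prop).
  set (AL := fun n => image Some (snd (projT2 (p n))) : L n -> Prop).
  assert (HL : forall n, G_delta (scott_open (leL n)) (AL n) /\
                         homeomorphic (O n) (subspace (scott_open (leL n)) (AL n))).
  { intro n. apply (lift_embedding_transfer _ _ _ (scott_open (fst (projT2 (p n)))));
      [apply scott_is_topology|apply lift_scott_open|apply scott_continuous_Some|apply Hp..]. }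
  assert (Hc : forall n, is_continuous_dcpo (leL n)).
  { intro n. apply lift_continuous_dcpo, Hp. }
  assert (Heq : scott_open (prod_le L leL) = product_topology L (fun n => scott_open (leL n))).
  { apply functional_extensionality. intro W. apply propositional_extensionality.
    apply (scott_open_prod L leL (fun _ => None) Hc (fun _ _ => I)). }
  exists (forall n, L n), (prod_le L leL), (prod_pred AL). split; [|split].
  - apply (prod_continuous_dcpo L leL (fun _ => None) Hc (fun _ _ => I)).
  - rewrite Heq. apply G_delta_prod; intro n; [apply scott_is_topology|apply HL].
  - rewrite Heq. apply homeomorphic_prod_embedding. intro n. apply HL.
Qed.

Lemma list_choice (A B : Type) (P : B -> Prop) (R : A -> B -> Prop) (l' : list A) :
  (forall a, In a l' -> exists b, P b /\ R a b) ->
  exists l, (forall b, In b l -> P b) /\ forall a, In a l' -> exists b, In b l /\ R a b.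
Proof.
  induction l' as [|a l' IH]; intro H.
  - exists nil. split; simpl; tauto.
  - destruct IH as [l [H1 H2]]; [intros; apply H; simpl; auto|].
    destruct (H a (or_introl eq_refl)) as [b [Pb Rb]].
    exists (b :: l). split.
    + intros b' [<-|Hb']; auto.
    + intros a' [<-|Ha']; [exists b; simpl; auto|].
      destruct (H2 a' Ha') as [b' [Hb' Rb']]. exists b'. simpl. auto.
Qed.

Lemma compact_image (Y Z : Type) (OY : topology Y) (OZ : topology Z) (e : Y -> Z) K :
  compact OY K -> continuous OY OZ e -> compact OZ (image e K).
Proof.
  intros HK He F HF Hcov.
  destruct (HK (fun U => exists W, F W /\ U = (fun y => W (e y)))) as [l' [Hl'1 Hl'2]].
  - intros U [W [FW ->]]. apply He, HF, FW.
  - intros y Ky. destruct (Hcov (e y)) as [W [FW Wy]]; [exists y; auto|].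
    exists (fun y => W (e y)). split; eauto.
  - destruct (list_choice _ _ F (fun U W => U = (fun y => W (e y))) l' Hl'1) as [l [H1 H2]].
    exists l. split; [exact H1|]. intros z [y [-> Ky]].
    destruct (Hl'2 y Ky) as [U [HU Uy]]. destruct (H2 U HU) as [W [HW ->]]. eauto.
Qed.

(* [None] is a new least point in the specialization order: its only neighbourhood is the
   whole space. *)
Definition lift_top {Y : Type} (O : topology Y) : topology (option Y) :=
  fun W => (forall o, W o) \/ (O (fun y => W (Some y)) /\ ~ W None).

Definition lift_closed {Y : Type} (K : Y -> Prop) (o : option Y) : Prop :=
  match o with None => True | Some y => K y end.

Section LiftTopology.
Context {Y : Type} {O : topology Y}.
Hypothesis HT : is_topology O.
Notation LO := (lift_top O).

Lemma lift_top_open_None W : LO W -> W None -> forall o, W o.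
Proof. intros [H|[_ H]] HN; tauto. Qed.

Lemma lift_top_continuous_Some : continuous O LO Some.
Proof.
  intros W [Hf|[H _]]; [|exact H].
  replace (fun x => W (Some x)) with (fun _ : Y => True); [apply open_full, HT|].
  apply pred_ext. intro; split; auto.
Qed.

Lemma lift_top_open_lift U : O U -> LO (lift_set U).
Proof. intro H. right. simpl. auto. Qed.

Lemma lift_top_is_topology : is_topology LO.
Proof.
  split; [|split].
  - left. auto.
  - intros U V HU HV. destruct (classic (U None /\ V None)) as [[HUN HVN]|HN].
    + left. intro o. split; apply lift_top_open_None; auto.
    + right. split; [|exact HN].
      apply open_inter; [exact HT|apply lift_top_continuous_Some..]; assumption.
  - intros F HF. destruct (classic (exists U, F U /\ U None)) as [[U [FU UN]]|Hn].
    + left. intro o. exists U. split; [exact FU|]. apply (lift_top_open_None U (HF U FU) UN).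
    + right. split; [|exact Hn].
      replace (fun y => exists U, F U /\ U (Some y)) with
        (fun y => exists V, (exists U, F U /\ V = (fun y => U (Some y))) /\ V y).
      * apply open_union; [exact HT|]. intros V [U [FU ->]].
        apply lift_top_continuous_Some, HF, FU.
      * apply pred_ext. intro y. split.
        -- intros [V [[U [FU ->]] HV]]. eauto.
        -- intros [U [FU HU]]. exists (fun y => U (Some y)). eauto.
Qed.

Lemma lift_top_locally_compact : locally_compact O -> locally_compact LO.
Proof.
  intros Hlc x U HU Ux. destruct (classic (U None)) as [UN|UN].
  - exists (fun _ => True), (fun _ => True).
    split; [|split; [|split; [|split; [|split]]]]; auto.
    + intros F HF Hcov. destruct (Hcov None I) as [W [FW WN]].
      exists (W :: nil). split; [intros V [<-|[]]; exact FW|].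
      intros y _. exists W. split; [simpl; auto|]. apply (lift_top_open_None W (HF W FW) WN).
    + intros y _. exact I.
    + left. auto.
    + intros y _. apply (lift_top_open_None U HU UN).
  - destruct HU as [Hf|[HU1 _]]; [exfalso; apply UN, Hf|].
    destruct x as [x|]; [|contradiction].
    destruct (Hlc x _ HU1 Ux) as [Q [V [HQc [HQs [HV [Vx [HVQ HQU]]]]]]].
    exists (lift_set Q), (lift_set V). split; [|split; [|split; [|split; [|split]]]].
    + replace (lift_set Q) with (image Some Q).
      * apply compact_image with (OY := O); [exact HQc|apply lift_top_continuous_Some].
      * apply pred_ext. intros [z|]; simpl; split.
        -- intros [y [[=->] Qy]]. exact Qy.
        -- intro Qz. exists z. auto.
        -- intros [y [[=] _]].
        -- intros [].
    + intros [y|] Hy; simpl.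
      * apply HQs. intros U' HU' HQU'. apply (Hy (lift_set U')); [apply lift_top_open_lift, HU'|].
        intros [z|]; simpl; auto.
      * apply (Hy (lift_set (fun _ => True))); [apply lift_top_open_lift, open_full, HT|].
        intros [z|]; simpl; auto.
    + apply lift_top_open_lift, HV.
    + exact Vx.
    + intros [y|]; simpl; auto.
    + intros [y|]; simpl; [auto|intros []].
Qed.

Lemma lift_top_closed_None K : is_closed LO K -> (exists o, K o) -> K None.
Proof.
  intros [Hf|[_ H]] [o Ko]; [exfalso; apply (Hf o), Ko|]. apply NNPP, H.
Qed.

Lemma lift_top_closed_Some K : is_closed LO K -> is_closed O (fun y => K (Some y)).
Proof. apply (lift_top_continuous_Some (fun o => ~ K o)). Qed.

Lemma lift_top_closed_lift K : is_closed O K -> is_closed LO (lift_closed K).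
Proof. intro H. right. simpl. auto. Qed.

Lemma closure_pt_lift_Some x y : closure_pt LO (Some x) (Some y) <-> closure_pt O x y.
Proof.
  split.
  - intros H K HK Kx. apply (H (lift_closed K)); [apply lift_top_closed_lift, HK|exact Kx].
  - intros H K HK Kx. apply (H (fun y => K (Some y))); [apply lift_top_closed_Some, HK|exact Kx].
Qed.

Lemma closure_pt_None x : closure_pt LO x None.
Proof. intros K HK Kx. apply lift_top_closed_None; eauto. Qed.

Lemma not_closure_pt_None_Some y : ~ closure_pt LO None (Some y).
Proof.
  intro H.
  assert (Hc : is_closed LO (fun o => o = None)).
  { right. split; [|simpl; tauto].
    replace (fun y : Y => ~ Some y = None) with (fun _ : Y => True); [apply open_full, HT|].
    apply pred_ext. intro; split; [congruence|auto]. }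
  discriminate (H _ Hc eq_refl).
Qed.

Lemma irreducible_closed_Some C : irreducible_closed LO C -> (exists y, C (Some y)) ->
  irreducible_closed O (fun y => C (Some y)).
Proof.
  intros [HC [_ Hirr]] Hne. split; [apply lift_top_closed_Some, HC|split; [exact Hne|]].
  intros C1 C2 H1 H2 Hcov.
  destruct (Hirr (lift_closed C1) (lift_closed C2)) as [H|H].
  - apply lift_top_closed_lift, H1.
  - apply lift_top_closed_lift, H2.
  - intros [x|] Hx; simpl; auto.
  - left. intros x Hx. apply (H (Some x) Hx).
  - right. intros x Hx. apply (H (Some x) Hx).
Qed.

Lemma lift_top_sober : sober O -> sober LO.
Proof.
  intros Hs C HCirr. pose proof HCirr as [HC [Hne _]].
  pose proof (lift_top_closed_None C HC Hne) as CN.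
  destruct (classic (exists y, C (Some y))) as [[y0 Cy0]|Hnone].
  - destruct (Hs _ (irreducible_closed_Some C HCirr (ex_intro _ y0 Cy0))) as [x [Hx Hu]].
    exists (Some x). split.
    + intros [y|].
      * rewrite closure_pt_lift_Some. apply Hx.
      * split; [intros _; apply closure_pt_None|auto].
    + intros [x'|] Hx'.
      * f_equal. apply Hu. intro y. rewrite <- closure_pt_lift_Some. apply Hx'.
      * exfalso. apply (not_closure_pt_None_Some y0), Hx', Cy0.
  - exists None. split.
    + intros [y|].
      * split; intro H; [exfalso; apply Hnone; eauto|].
        exfalso. apply (not_closure_pt_None_Some y H).
      * split; [|auto]. intros _ K _ KN. exact KN.
    + intros [x'|] Hx'; [|reflexivity]. exfalso. apply Hnone. exists x'.
      apply Hx'. intros K _ Kx. exact Kx.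
Qed.

End LiftTopology.

Lemma irreducible_meet_open (Z : Type) (OZ : topology Z) C U1 U2 :
  irreducible_closed OZ C -> OZ U1 -> OZ U2 ->
  (exists y, C y /\ U1 y) -> (exists y, C y /\ U2 y) -> exists y, C y /\ U1 y /\ U2 y.
Proof.
  intros [_ [_ Hirr]] H1 H2 [y1 [C1 U1y]] [y2 [C2 U2y]].
  apply NNPP. intro Hn.
  destruct (Hirr (fun x => ~ U1 x) (fun x => ~ U2 x)) as [H|H].
  - apply closed_compl, H1.
  - apply closed_compl, H2.
  - intros x Cx. apply NNPP. intro H'. apply Hn. exists x. split; [exact Cx|].
    split; apply NNPP; tauto.
  - apply (H y1); auto.
  - apply (H y2); auto.
Qed.

Section ProductSober.
Variables (Y : nat -> Type) (O : forall n, topology (Y n)).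
Hypothesis HT : forall n, is_topology (O n).
Notation PO := (product_topology Y O).

Definition coord_closure (C : (forall n, Y n) -> Prop) (i : nat) (a : Y i) : Prop :=
  forall K, is_closed (O i) K -> (forall y, C y -> K (y i)) -> K a.

Lemma coord_closure_closed C i : is_closed (O i) (coord_closure C i).
Proof.
  unfold is_closed.
  replace (fun a => ~ coord_closure C i a) with
    (fun a => exists V, (exists K, is_closed (O i) K /\ (forall y, C y -> K (y i)) /\
                                   V = (fun a => ~ K a)) /\ V a).
  - apply open_union; [apply HT|]. intros V [K [HK [_ ->]]]. exact HK.
  - apply pred_ext. intro a. split.
    + intros [V [[K [HK [HCK ->]]] HV]] HCa. apply HV, HCa; auto.
    + intro Hn. destruct (not_all_ex_not _ _ Hn) as [K HnK].
      apply imply_to_and in HnK as [HK HnK]. apply imply_to_and in HnK as [HCK HKa].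
      exists (fun a => ~ K a). split; [exists K; auto|exact HKa].
Qed.

Lemma coord_closure_irreducible C i :
  irreducible_closed PO C -> irreducible_closed (O i) (coord_closure C i).
Proof.
  intros [_ [[y0 Cy0] Hirr]]. split; [apply coord_closure_closed|split].
  - exists (y0 i). intros K _ HK. apply HK, Cy0.
  - intros C1 C2 H1 H2 Hcov.
    destruct (Hirr (fun y => C1 (y i)) (fun y => C2 (y i))) as [H|H].
    + apply proj_closed; auto.
    + apply proj_closed; auto.
    + intros y Cy. apply Hcov. intros K _ HK. apply HK, Cy.
    + left. intros a Ha. apply Ha; auto.
    + right. intros a Ha. apply Ha; auto.
Qed.

Lemma irreducible_meets_box C x N V : irreducible_closed PO C ->
  (forall i, coord_closure C i (x i)) -> (forall i, O i (V i)) ->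
  box Y N V x -> exists y, C y /\ box Y N V y.
Proof.
  intros HCirr Hx HV. induction N as [|N IH]; intro Hb.
  - destruct (proj1 (proj2 HCirr)) as [y0 Cy0]. exists y0. split; [exact Cy0|]. intros i Hi; lia.
  - destruct IH as [y [Cy Hy]]; [intros i Hi; apply Hb; lia|].
    assert (Hy' : exists y', C y' /\ V N (y' N)).
    { apply NNPP. intro Hn. apply (Hx N (fun a => ~ V N a)).
      - apply closed_compl, HV.
      - intros y' Cy' HV'. apply Hn. eauto.
      - apply Hb. lia. }
    destruct (irreducible_meet_open _ PO C (box Y N V) (fun y => V N (y N)) HCirr)
      as [z [Cz [Hz1 Hz2]]].
    + apply box_open, HV.
    + apply proj_open; auto.
    + eauto.
    + exact Hy'.
    + exists z. split; [exact Cz|]. intros i Hi.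
      destruct (Nat.eq_dec i N) as [->|]; [exact Hz2|]. apply Hz1. lia.
Qed.

(* The generic point of an irreducible closed [C] has as coordinates the generic points of
   the closures of the projections of [C]. *)
Lemma product_sober : (forall n, sober (O n)) -> sober PO.
Proof.
  intros Hs C HCirr. pose proof HCirr as [HC _].
  destruct (dep_choice (T := Y) (fun i x =>
      (forall a, coord_closure C i a <-> closure_pt (O i) x a) /\
      forall x', (forall a, coord_closure C i a <-> closure_pt (O i) x' a) -> x' = x)) as [x Hx].
  { intro i. apply Hs, coord_closure_irreducible, HCirr. }
  assert (Cix : forall i, coord_closure C i (x i)).
  { intro i. apply (proj2 (proj1 (Hx i) (x i))). intros K _ Kx. exact Kx. }
  assert (Cx : C x).
  { apply NNPP. intro Hn. destruct (HC x Hn) as [N [V [HV [Hb Hsub]]]].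
    destruct (irreducible_meets_box C x N V HCirr Cix HV Hb) as [y [Cy Hy]].
    apply (Hsub y Hy). exact Cy. }
  exists x. split.
  - intro z. split.
    + intros Cz K HK Kx. apply NNPP. intro Hn. destruct (HK z Hn) as [N [V [HV [Hb Hsub]]]].
      apply (Hsub x); [|exact Kx]. intros i Hi. apply NNPP. intro Hn'.
      assert (Hcz : closure_pt (O i) (x i) (z i)).
      { apply (proj1 (proj1 (Hx i) (z i))). intros K' _ HK'. apply HK', Cz. }
      apply (Hcz (fun a => ~ V i a)); [apply closed_compl, HV|exact Hn'|apply Hb, Hi].
    + intros Hz. apply Hz; [exact HC|exact Cx].
  - intros x' Hx'. apply functional_extensionality_dep. intro i. apply (proj2 (Hx i)).
    intro a. split.
    + intros Ha K HK Kx'. apply Ha; [exact HK|]. intros y Cy.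
      apply (proj1 (Hx' y) Cy (fun y => K (y i))); [apply proj_closed; auto|exact Kx'].
    + intros Ha K HK HCK. apply Ha; [exact HK|]. apply HCK. apply Hx'. intros K' _ H. exact H.
Qed.

End ProductSober.

Section ProductCompact.
Variables (Y : nat -> Type) (O : forall n, topology (Y n)) (bot : forall n, Y n).
Hypothesis HT : forall n, is_topology (O n).
Hypothesis Hbot : forall n W, O n W -> W (bot n) -> forall a, W a.
Notation PO := (product_topology Y O).

Section Tube.
Variables (N : nat) (Q : forall n, Y n -> Prop) (F : ((forall n, Y n) -> Prop) -> Prop).
Hypothesis HQ : forall i, i < N -> compact (O i) (Q i).
Hypothesis HF : forall U, F U -> PO U.
Hypothesis Hcov : forall y, (forall i, i < N -> Q i (y i)) -> exists U, F U /\ U y.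

Definition in_Qbox (y : forall n, Y n) : Prop := forall i, i < N -> Q i (y i).

Definition finitely_covered (k : nat) (V : forall n, Y n -> Prop) : Prop :=
  exists l, (forall U, In U l -> F U) /\
    forall y, in_Qbox y -> box Y k V y -> exists U, In U l /\ U y.

Definition tube_covered (k : nat) : Prop :=
  forall z : forall n, Y n, (forall i, i < k -> Q i (z i)) ->
    exists V, (forall i, O i (V i)) /\ box Y k V z /\ finitely_covered k V.

Lemma tube_covered_N : tube_covered N.
Proof.
  intros z Hz.
  (* Beyond [N] the coordinates are [bot], whose only neighbourhood is the whole factor. *)
  set (z' := fun i => if Nat.ltb i N then z i else bot i).
  assert (Hz' : forall i, i < N -> z' i = z i).
  { intros i Hi. unfold z'. rewrite (proj2 (Nat.ltb_lt i N) Hi). reflexivity. }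
  assert (Hz'' : forall i, N <= i -> z' i = bot i).
  { intros i Hi. unfold z'. rewrite (proj2 (Nat.ltb_ge i N) Hi). reflexivity. }
  destruct (Hcov z') as [U [FU Uz']]; [intros i Hi; rewrite Hz'; auto|].
  destruct (HF U FU z' Uz') as [N' [V [HV [Hb Hsub]]]].
  exists (trunc Y N' V). split; [apply trunc_open; auto|split].
  - intros i Hi. rewrite <- (Hz' i Hi). apply (box_trunc Y N' V z' Hb N i Hi).
  - exists (U :: nil). split; [intros U' [<-|[]]; exact FU|].
    intros y _ Hy. exists U. split; [simpl; auto|]. apply Hsub. intros i Hi.
    destruct (lt_dec i N).
    + rewrite <- (trunc_lt Y N' V i (y i) Hi). apply Hy. assumption.
    + apply (Hbot i (V i) (HV i)). rewrite <- Hz'' by lia. apply Hb, Hi.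
Qed.

Definition slice_covered (k : nat) (z : forall n, Y n) (W : Y k -> Prop) : Prop :=
  exists V, (forall i, O i (V i)) /\ (forall i, i < k -> V i (z i)) /\ W = V k /\
    finitely_covered (S k) V.

Lemma slices_covered k z (Ws : list (Y k -> Prop)) :
  (forall W, In W Ws -> slice_covered k z W) ->
  exists V, (forall i, O i (V i)) /\ box Y k V z /\
    exists l, (forall U, In U l -> F U) /\
      forall y, in_Qbox y -> box Y k V y -> (exists W, In W Ws /\ W (y k)) ->
        exists U, In U l /\ U y.
Proof.
  induction Ws as [|W Ws IH]; intro HG.
  - exists (fun _ _ => True). split; [intro; apply open_full, HT|split; [intros i Hi; exact I|]].
    exists nil. split; [simpl; tauto|]. intros y _ _ [W [[] _]].
  - destruct IH as [V2 [HV2 [Hb2 [l2 [Hl2 Hc2]]]]]; [intros; apply HG; simpl; auto|].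
    destruct (HG W (or_introl eq_refl)) as [V1 [HV1 [Hb1 [-> [l1 [Hl1 Hc1]]]]]].
    exists (fun i a => V1 i a /\ V2 i a). split; [|split].
    + intro i. apply open_inter; auto.
    + intros i Hi. split; auto.
    + exists (l1 ++ l2). split.
      * intros U HU. apply in_app_or in HU as [HU|HU]; auto.
      * intros y Qy Hy [W' [[<-|HW'] HW'y]].
        -- destruct (Hc1 y Qy) as [U [HU Uy]].
           { intros i Hi. destruct (Nat.eq_dec i k) as [->|]; [exact HW'y|]. apply Hy. lia. }
           exists U. split; [apply in_or_app; auto|exact Uy].
        -- destruct (Hc2 y Qy) as [U [HU Uy]]; [intros i Hi; apply Hy, Hi|eauto|].
           exists U. split; [apply in_or_app; auto|exact Uy].
Qed.

(* The tube lemma: compactness of [Q k] lets finitely many tubes over [S k] coordinates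
   combine into one over [k] coordinates. *)
Lemma tube_covered_step k : k < N -> tube_covered (S k) -> tube_covered k.
Proof.
  intros Hk HR z Hz.
  destruct (HQ k Hk (slice_covered k z)) as [Ws [HWs1 HWs2]].
  - intros W [V [HV [_ [-> _]]]]. apply HV.
  - intros t Qt. destruct (HR (update z k t)) as [V [HV [Hb Hcv]]].
    { intros i Hi. destruct (Nat.eq_dec k i) as [<-|Hne].
      - rewrite update_eq. exact Qt.
      - rewrite update_neq by exact Hne. apply Hz. lia. }
    exists (V k). split.
    + exists V. split; [exact HV|split; [|split; [reflexivity|exact Hcv]]].
      intros i Hi. rewrite <- (update_neq z k t i) by lia. apply Hb. lia.
    + pose proof (Hb k (Nat.lt_succ_diag_r k)) as Hk0. rewrite update_eq in Hk0. exact Hk0.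
  - destruct (slices_covered k z Ws HWs1) as [V [HV [Hb [l [Hl Hc]]]]].
    exists V. split; [exact HV|split; [exact Hb|]]. exists l. split; [exact Hl|].
    intros y Qy Hy. apply Hc; [exact Qy|exact Hy|]. apply HWs2, Qy, Hk.
Qed.

Lemma tube_covered_0 : tube_covered 0.
Proof.
  assert (H : forall j, j <= N -> tube_covered (N - j)).
  { induction j as [|j IH]; intro Hj.
    - rewrite Nat.sub_0_r. apply tube_covered_N.
    - apply tube_covered_step; [lia|]. replace (S (N - S j)) with (N - j) by lia. apply IH. lia. }
  replace 0 with (N - N) by lia. apply H. lia.
Qed.

End Tube.

Lemma prod_compact N (Q : forall n, Y n -> Prop) :
  (forall i, i < N -> compact (O i) (Q i)) ->
  compact PO (fun y => forall i, i < N -> Q i (y i)).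
Proof.
  intros HQ F HF Hcov.
  destruct (tube_covered_0 N Q F HQ HF Hcov bot) as [V [_ [_ [l [Hl Hc]]]]]; [intros; lia|].
  exists l. split; [exact Hl|]. intros y Qy. apply Hc; [exact Qy|]. intros i Hi; lia.
Qed.

Lemma prod_locally_compact : (forall n, locally_compact (O n)) -> locally_compact PO.
Proof.
  intros Hlc x W HW Wx. destruct (HW x Wx) as [N [V [HV [Hb Hsub]]]].
  destruct (dep_choice (T := fun i => ((Y i -> Prop) * (Y i -> Prop))%type) (fun i p =>
     O i (snd p) /\ snd p (x i) /\ (forall a, snd p a -> fst p a) /\
     (i < N -> compact (O i) (fst p) /\ saturated (O i) (fst p) /\
               forall a, fst p a -> V i a)))
     as [p Hp].
  { intro i. destruct (lt_dec i N) as [Hi|Hi].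
    - destruct (Hlc i (x i) (V i) (HV i) (Hb i Hi)) as [Q [V' [H1 [H2 [H3 [H4 [H5 H6]]]]]]].
      exists (Q, V'). simpl. auto 10.
    - exists ((fun _ => True), (fun _ => True)). simpl.
      split; [apply open_full, HT|split; [exact I|split; [auto|lia]]]. }
  exists (fun y => forall i, i < N -> fst (p i) (y i)), (box Y N (fun i => snd (p i))).
  split; [|split; [|split; [|split; [|split]]]].
  - apply prod_compact. intros i Hi. apply Hp, Hi.
  - intros y Hy i Hi. apply (proj1 (proj2 (proj2 (proj2 (proj2 (Hp i))) Hi))).
    intros U HU HQU. apply (Hy (fun z => U (z i))).
    + apply proj_open; auto.
    + intros z Hz. apply HQU, Hz, Hi.
  - apply box_open. intro i. apply Hp.
  - intros i Hi. apply Hp.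
  - intros y Hy i Hi. apply (proj1 (proj2 (proj2 (Hp i)))), Hy, Hi.
  - intros y Hy. apply Hsub. intros i Hi.
    apply (proj2 (proj2 (proj2 (proj2 (proj2 (Hp i))) Hi))), Hy, Hi.
Qed.

End ProductCompact.

Lemma LCS_complete_prod (X : nat -> Type) (O : forall n, topology (X n)) :
  (forall n, LCS_complete (O n)) -> LCS_complete (product_topology X O).
Proof.
  intro HD.
  destruct (dep_choice (T := fun _ => {Y : Type & (topology Y * (Y -> Prop))%type})
    (fun n p => is_topology (fst (projT2 p)) /\ locally_compact (fst (projT2 p)) /\
       sober (fst (projT2 p)) /\ G_delta (fst (projT2 p)) (snd (projT2 p)) /\
       homeomorphic (O n) (subspace (fst (projT2 p)) (snd (projT2 p)))))
    as [p Hp].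
  { intro n. destruct (HD n) as [Y [OY [A H]]]. exists (existT _ Y (OY, A)). exact H. }
  set (L := fun n => option (projT1 (p n))).
  set (OL := fun n => lift_top (fst (projT2 (p n))) : topology (L n)).
  set (AL := fun n => image Some (snd (projT2 (p n))) : L n -> Prop).
  assert (HT : forall n, is_topology (OL n)).
  { intro n. apply lift_top_is_topology, Hp. }
  assert (HL : forall n, G_delta (OL n) (AL n) /\ homeomorphic (O n) (subspace (OL n) (AL n))).
  { intro n. apply (lift_embedding_transfer _ _ _ (fst (projT2 (p n))));
      [apply Hp|apply lift_top_open_lift|
      apply lift_top_continuous_Some, Hp|apply Hp|apply Hp]. }
  exists (forall n, L n), (product_topology L OL), (prod_pred AL).
  split; [|split; [|split; [|split]]].
  - apply product_is_topology, HT.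
  - apply (prod_locally_compact L OL (fun _ => None) HT).
    + intros n W HW HWN. apply (lift_top_open_None W HW HWN).
    + intro n. apply lift_top_locally_compact; apply Hp.
  - apply product_sober; [exact HT|]. intro n. apply lift_top_sober; apply Hp.
  - apply G_delta_prod; [exact HT|]. intro n. apply HL.
  - apply homeomorphic_prod_embedding. intro n. apply HL.
Qed.

Theorem proposition14p2 :
  (forall (X : nat -> Type) (O : forall n, topology (X n)),
     (forall n, is_topology (O n)) ->
     (forall n, domain_complete (O n)) ->
     domain_complete (product_topology X O)) /\
  (forall (X : nat -> Type) (O : forall n, topology (X n)),
     (forall n, is_topology (O n)) ->
     (forall n, LCS_complete (O n)) ->
     LCS_complete (product_topology X O)).
Proof.
  split; intros X O _.
  - apply domain_complete_prod.
  - apply LCS_complete_prod.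
Qed.
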